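(* Let $(G,H,\mathsf{low},\mathsf{up})$ be an instance of $\textsc{Hom}_<^\star$ where $H$ is a $k$-shifted clique with $k\ge 2$ and segments $V_1<\dots<V_k$ as in the definition. Let $R=V_k=\{v_p,\dots,v_h\}$ and $L=V(H)\setminus R$. Suppose there exists a solution $\phi:G\to H$ and let $X=\phi^{-1}(R)$. Define $\mathsf{low}',\mathsf{up}':X\to\{p,\dots,h\}$ by $\mathsf{low}'(u)=\max(\mathsf{low}(u),p)$ and $\mathsf{up}'(u)=\mathsf{up}(u)$, and let $f$ be a minimum solution of the instance $(G[X],H[R],\mathsf{low}',\mathsf{up}')$ of $\textsc{Hom}_<^\star$. Then the map $\phi':V(G)\to V(H)$ given by $\phi'(u)=f(u)$ for $u\in X$ and $\phi'(u)=\phi(u)$ for $u\notin X$ is a solution of the original instance $(G,H,\mathsf{low},\mathsf{up})$.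
   Context: An ordered graph is a (simple) graph whose vertex set is equipped with a total order $\le$; induced subgraphs inherit the order. For ordered graphs $G,H$, an ordered homomorphism from $G$ to $H$ is a map $f:V(G)\to V(H)$ such that (1) $uv\in E(G)$ implies $f(u)f(v)\in E(H)$, and (2) $u\le v$ implies $f(u)\le f(v)$. The vertices of $H$ are $v_1<\dots<v_h$, identified with indices $1,\dots,h$. A segment is a set of vertices consecutive in the order. $H$ is a $k$-shifted clique if $V(H)$ can be partitioned into segments $V_1,\dots,V_k$ with $V_i<V_{i+1}$ for $i\in[k-1]$, each inducing a clique, such that for every $i>1$ and all $u,u'\in V_i$ with $u<u'$ we have $N(u')\cap\bigcup_{j<i}V_j\subseteq N(u)\cap\bigcup_{j<i}V_j$. An instance of $\textsc{Hom}_<^\star$ consists of ordered graphs $G,H$ and functions $\mathsf{low},\mathsf{up}$ from $V(G)$ to indices of vertices of $H$; a solution is an ordered homomorphism $f:G\to H$ with $\mathsf{low}(v)\le f(v)\le\mathsf{up}(v)$ for all $v$. A solution $f$ is minimum if $f(v)\le f'(v)$ for every solution $f'$ and every vertex $v$. *)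

From mathcomp Require Import all_boot.
Set Implicit Arguments. Unset Strict Implicit. Unset Printing Implicit Defensive.

(* An ordered graph on n vertices: vertex set 'I_n = {0,...,n-1}, totally
   ordered by the natural order of indices; simple = symmetric irreflexive. *)
Record ograph := OGraph {
  nv : nat;
  adj : rel 'I_nv;
  adj_sym : symmetric adj;
  adj_irr : irreflexive adj }.

(* Solutions of the instance (G[S], H[T], low, up) of Hom_<^*, where S, T
   are vertex subsets inducing subgraphs with the inherited order.  A map
   G[S] -> H[T] is represented by f : 'I_(nv G) -> 'I_(nv H) whose values on
   S lie in T (values outside S are irrelevant). low/up give vertex indices
   of H (0-based). *)
Definition solution_on (G H : ograph) (S : {set 'I_(nv G)}) (T : {set 'I_(nv H)})
    (low up : 'I_(nv G) -> nat) (f : 'I_(nv G) -> 'I_(nv H)) : Prop :=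
  [/\ forall u, u \in S -> f u \in T,
      forall u v, u \in S -> v \in S -> adj u v -> adj (f u) (f v),
      forall u v, u \in S -> v \in S -> (u <= v)%N -> (f u <= f v)%N
    & forall u, u \in S -> (low u <= f u)%N && (f u <= up u)%N].

Definition solution (G H : ograph) (low up : 'I_(nv G) -> nat)
    (f : 'I_(nv G) -> 'I_(nv H)) : Prop :=
  solution_on setT setT low up f.

Definition min_solution_on (G H : ograph) (S : {set 'I_(nv G)}) (T : {set 'I_(nv H)})
    (low up : 'I_(nv G) -> nat) (f : 'I_(nv G) -> 'I_(nv H)) : Prop :=
  solution_on S T low up f /\
  forall f', solution_on S T low up f' -> forall u, u \in S -> (f u <= f' u)%N.

(* Segment V_i (1 <= i <= k) of a partition given by boundaries
   b 0 = 0 < b 1 < ... < b k = h: V_i = {v | b (i-1) <= v < b i}. *)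
Definition in_seg (b : nat -> nat) (i v : nat) : bool := (b i.-1 <= v < b i)%N.

Definition shifted_clique_seg (H : ograph) (k : nat) (b : nat -> nat) : Prop :=
  [/\ b 0 = 0, b k = nv H,
      (forall i, i < k -> b i < b i.+1)%N,
      (forall i (u v : 'I_(nv H)), (1 <= i <= k)%N -> in_seg b i u -> in_seg b i v ->
         u != v -> adj u v)
    &
      (forall i (u u' w : 'I_(nv H)), (1 < i <= k)%N -> in_seg b i u -> in_seg b i u' ->
         (u < u')%N -> (w < b i.-1)%N -> adj u' w -> adj u w)].

(* Restricted to X = phi^-1(V_k), phi is itself a solution of the sub-instance,
   so the minimum solution f satisfies f <= phi on X.  The map that follows f
   on X and phi elsewhere is monotone because X is an up-set of G and both maps
   send X into V_k and its complement below V_k.  An edge uv with u in X and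
   v outside X is mapped by phi to an edge from phi u in V_k to phi v in an
   earlier segment; as f u <= phi u both lie in V_k, the neighbourhood
   inclusion of the shifted clique makes f u adjacent to phi v as well. *)
From mathcomp Require Import all_boot.

Set Implicit Arguments.
Unset Strict Implicit.
Unset Printing Implicit Defensive.

Lemma last_segment_adj_down (H : ograph) (k : nat) (b : nat -> nat) :
  (1 < k)%N -> shifted_clique_seg H k b ->
  forall x y w : 'I_(nv H), (b k.-1 <= x <= y)%N -> (w < b k.-1)%N ->
  adj y w -> adj x w.
Proof.
move=> lt1k [_ bk _ _ nbr_incl] x y w /andP[px xy] wp ayw.
have in_last (v : 'I_(nv H)) : (b k.-1 <= v)%N -> in_seg b k v.
  by move=> pv; rewrite /in_seg pv bk ltn_ord.
move: xy; rewrite leq_eqVlt => /orP[/eqP/val_inj -> // | xy].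
apply: (nbr_incl k x y w _ _ _ xy wp ayw).
- by rewrite lt1k leqnn.
- exact: in_last.
- exact/in_last/(leq_trans px)/ltnW.
Qed.

Lemma solutionP (G H : ograph) (low up : 'I_(nv G) -> nat) (phi : 'I_(nv G) -> 'I_(nv H)) :
  solution low up phi <->
  [/\ {homo phi : u v / adj u v}, {homo phi : u v / (u <= v)%N}
    & forall u, (low u <= phi u <= up u)%N].
Proof.
split=> [[_ phi_adj phi_mono phi_bd] | [phi_adj phi_mono phi_bd]].
  by split=> [u v|u v|u]; [apply: phi_adj | apply: phi_mono | apply: phi_bd].
split=> [u _|u v _ _|u v _ _|u _];
  by [rewrite inE | apply: phi_adj | apply: phi_mono | apply: phi_bd].
Qed.

Section PatchLastSegment.

Variables (G H : ograph) (low up : 'I_(nv G) -> nat) (p : nat).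
Variables (phi f : 'I_(nv G) -> 'I_(nv H)).

Let R := [set v : 'I_(nv H) | (p <= v)%N].
Let X := [set u : 'I_(nv G) | phi u \in R].
Let low' := fun u => maxn (low u) p.
Let g := fun u => if u \in X then f u else phi u.

Hypothesis phi_adj : {homo phi : u v / adj u v}.
Hypothesis phi_mono : {homo phi : u v / (u <= v)%N}.
Hypothesis phi_bd : forall u, (low u <= phi u <= up u)%N.

Lemma solution_on_preimage_threshold : solution_on X R low' up phi.
Proof.
split=> [u|u v _ _|u v _ _|u]; rewrite ?inE //.
- exact: phi_adj.
- exact: phi_mono.
- by move=> pu; have /andP[lo hi] := phi_bd u; rewrite geq_max lo pu hi.
Qed.

Hypothesis f_sol : solution_on X R low' up f.
Hypothesis f_le_phi : forall u, u \in X -> (f u <= phi u)%N.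
Hypothesis adj_down : forall x y w : 'I_(nv H),
  (p <= x <= y)%N -> (w < p)%N -> adj y w -> adj x w.

Lemma patch_cross_adj u v :
  u \in X -> v \notin X -> adj u v -> adj (f u) (phi v).
Proof.
case: f_sol => fR _ _ _ uX vX uv.
have pfu : (p <= f u)%N by have := fR u uX; rewrite inE.
rewrite !inE -ltnNge in vX.
by apply: (adj_down (y := phi u)); rewrite ?pfu ?f_le_phi ?phi_adj.
Qed.

Lemma patch_adj : {homo g : u v / adj u v}.
Proof.
case: f_sol => _ f_adj _ _ u v uv; rewrite /g.
case: ifP => uX; case: ifP => vX.
- exact: f_adj.
- by apply: patch_cross_adj; rewrite ?vX.
- by rewrite adj_sym; apply: patch_cross_adj; rewrite ?uX // adj_sym.
- exact: phi_adj.
Qed.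

Lemma patch_mono : {homo g : u v / (u <= v)%N}.
Proof.
case: f_sol => fR _ f_mono _ u v uv; rewrite /g.
have phi_uv := phi_mono uv.
case: ifP => uX; case: ifP => vX.
- exact: f_mono.
- by move: uX vX; rewrite !inE => pu /negbT; rewrite (leq_trans pu phi_uv).
- move: uX (fR v vX); rewrite !inE => /negbT; rewrite -ltnNge => phi_u_lt pv.
  exact: ltnW (leq_trans phi_u_lt pv).
- exact: phi_uv.
Qed.

Lemma patch_bounds u : (low u <= g u <= up u)%N.
Proof.
case: f_sol => _ _ _ f_bd; rewrite /g.
case: ifP => uX; last exact: phi_bd.
have /andP[lo ->] := f_bd u uX.
by rewrite (leq_trans (leq_maxl _ _) lo).
Qed.

End PatchLastSegment.

Theorem lemma2 (G H : ograph) (low up : 'I_(nv G) -> nat) (k : nat) (b : nat -> nat)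
  (hk : (2 <= k)%N) (hH : shifted_clique_seg H k b)
  (phi : 'I_(nv G) -> 'I_(nv H)) (hphi : solution low up phi)
  (f : 'I_(nv G) -> 'I_(nv H)) :
  let p := b k.-1 in
  let R := [set v : 'I_(nv H) | (p <= v)%N] in
  let X := [set u : 'I_(nv G) | phi u \in R] in
  let low' := fun u => maxn (low u) p in
  min_solution_on X R low' up f ->
  solution low up (fun u => if u \in X then f u else phi u).
Proof.
move=> p R X low' [f_sol f_min].
case/solutionP: hphi => phi_adj phi_mono phi_bd.
have f_le_phi u : u \in X -> (f u <= phi u)%N.
  by apply: f_min; apply: solution_on_preimage_threshold.
have adj_down := last_segment_adj_down hk hH.
apply/solutionP; split.
- exact: patch_adj phi_adj f_sol f_le_phi adj_down.
- exact: patch_mono phi_mono f_sol.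
- exact: patch_bounds phi_bd f_sol.
Qed.
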